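(* Let $G$ be a group with multiplication $\mu$ and neutral element $e$, acting partially on a set $X$ via subsets $X_g\subseteq X$ and bijections $\alpha_g:X_{g^{-1}}\to X_g$ ($g\in G$). Put $G\bullet X=\{(g,x)\in G\times X\mid x\in X_{g^{-1}}\}$, let $\iota:G\bullet X\to G\times X$ be the inclusion and $\alpha:G\bullet X\to X$, $\alpha(g,x)=\alpha_g(x)$. On $G\times X$ define $(g,x)\sim(h,y)$ iff $(h^{-1}g,x)\in G\bullet X$ and $\alpha(h^{-1}g,x)=y$. Then the quotient set $Y=(G\times X)/\!\sim$, with the canonical projection $G\times X\to Y$, $(g,x)\mapsto[g,x]$, is the coequalizer in $\mathsf{Set}$ of the pair of maps $$G\times\alpha,\ \ (\mu\times X)\circ(G\times\iota)\ :\ G\times(G\bullet X)\longrightarrow G\times X.$$ Consequently, the globalization of this partial action is given exactly by this coequalizer.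
   Context: A partial action of a group $G$ on a set $X$ consists of subsets $X_g\subseteq X$ and bijections $\alpha_g:X_{g^{-1}}\to X_g$ for $g\in G$ such that $X_e=X$, $\alpha_e=\mathrm{id}_X$, and for all $g,h\in G$ and $x\in X_{h^{-1}}$ with $\alpha_h(x)\in X_{g^{-1}}$ one has $x\in X_{(gh)^{-1}}$ and $\alpha_{gh}(x)=\alpha_g(\alpha_h(x))$. It is known that $\sim$ is an equivalence relation and that $Y=(G\times X)/\!\sim$ with the global action $h\cdot[g,x]=[hg,x]$ is the globalization (enveloping action) of the partial action, i.e. the smallest $G$-set containing $X$ such that the partial action is the restriction of the global one. *)

(* G is an arbitrary (possibly infinite) group, [groupType]
   from mathcomp's monoid.v; X is an arbitrary type (a set). *)
From HB Require Import structures.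
From mathcomp Require Import all_boot.
From mathcomp Require Export monoid.

Set Implicit Arguments.
Unset Strict Implicit.
Unset Printing Implicit Defensive.

Local Open Scope group_scope.

(* A partial action of G on X: subsets X_g (given by [pdom g]) and maps
   alpha_g (given by [pact g], only meaningful on X_{g^-1}). *)
Record partial_action (G : groupType) (X : Type) := PartialAction {
  pdom : G -> X -> Prop;
  pact : G -> X -> X;
  pdom1 : forall x, pdom 1 x;
  pact1 : forall x, pact 1 x = x;
  pact_dom : forall g x, pdom g^-1 x -> pdom g (pact g x);
  pact_inj : forall g x y, pdom g^-1 x -> pdom g^-1 y ->
               pact g x = pact g y -> x = y;
  pact_surj : forall g y, pdom g y -> exists2 x, pdom g^-1 x & pact g x = y;
  pact_comp : forall g h x, pdom h^-1 x -> pdom g^-1 (pact h x) ->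
               pdom (g * h)^-1 x /\ pact (g * h) x = pact g (pact h x)
}.

Section GbulletX.
Variables (G : groupType) (X : Type) (A : partial_action G X).

Definition GbX := {p : G * X | pdom A (p.1)^-1 p.2}.

Definition iota_GbX (p : GbX) : G * X := sval p.

Definition alpha_GbX (p : GbX) : X := pact A (sval p).1 (sval p).2.

Definition coeq_map1 (q : G * GbX) : G * X := (q.1, alpha_GbX q.2).

Definition coeq_map2 (q : G * GbX) : G * X :=
  (q.1 * (iota_GbX q.2).1, (iota_GbX q.2).2).

Definition glob_rel (a b : G * X) : Prop :=
  pdom A (b.1^-1 * a.1)^-1 a.2 /\ pact A (b.1^-1 * a.1) a.2 = b.2.

Definition glob_quot : Type := {P : G * X -> Prop | exists a, P = glob_rel a}.

Definition glob_proj (a : G * X) : glob_quot :=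
  exist (fun P => exists a, P = glob_rel a) (glob_rel a) (ex_intro _ a erefl).

End GbulletX.

Definition is_coequalizer (A B Y : Type) (f1 f2 : A -> B) (q : B -> Y) : Prop :=
  (forall a, q (f1 a) = q (f2 a)) /\
  forall (Z : Type) (h : B -> Z), (forall a, h (f1 a) = h (f2 a)) ->
    exists u : Y -> Z, (forall b, u (q b) = h b) /\
      forall u' : Y -> Z, (forall b, u' (q b) = h b) -> forall y, u' y = u y.

(** The relation [~] is exactly the image of the pair of maps: [(g,x) ~ (h,y)]
    holds iff [(g,x)] and [(h,y)] are the images of [(h, (h^-1 g, x))] under
    [(mu x X) o (G x iota)] and [G x alpha].  The axioms of a partial action make
    this image an equivalence relation, so the projection onto its classes is
    surjective with kernel the relation generated by the pair: this is the
    coequalizer of two maps in Set. *)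
From mathcomp Require Import all_boot.
From mathcomp Require Import monoid.
From Stdlib Require Import ClassicalEpsilon FunctionalExtensionality PropExtensionality.

Set Implicit Arguments.
Unset Strict Implicit.
Unset Printing Implicit Defensive.

Local Open Scope group_scope.

Lemma surjective_coequalizer (A B Y : Type) (f1 f2 : A -> B) (q : B -> Y) :
    (forall y, exists b, q b = y) ->
    (forall a, q (f1 a) = q (f2 a)) ->
    (forall b b', q b = q b' -> exists a, f1 a = b /\ f2 a = b') ->
  is_coequalizer f1 f2 q.
Proof.
move=> q_surj q_coeq q_ker; split=> // Z h h_coeq.
pose s y := proj1_sig (constructive_indefinite_description _ (q_surj y)).
have sK y : q (s y) = y by rewrite /s; case: constructive_indefinite_description.
exists (fun y => h (s y)); split=> [b | u' u'q y].
  by have [a [<- <-]] := q_ker _ _ (sK (q b)).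
by rewrite -[in LHS](sK y) u'q.
Qed.

Section Globalization.
Variables (G : groupType) (X : Type) (A : partial_action G X).

Lemma glob_rel_refl a : glob_rel A a a.
Proof. by rewrite /glob_rel mulVg invg1; split; [exact: pdom1 | exact: pact1]. Qed.

Lemma glob_rel_sym a b : glob_rel A a b -> glob_rel A b a.
Proof.
case: a b => [g x] [h y]; rewrite /glob_rel /= => -[dom_x <-].
set k := h^-1 * g in dom_x *.
have -> : g^-1 * h = k^-1 by rewrite /k invgM invgK.
have dom_kx : pdom A (k^-1)^-1 (pact A k x) by rewrite invgK; exact: pact_dom.
have [_ <-] := pact_comp dom_x dom_kx.
by rewrite invgK mulVg pact1; split=> //; exact: pact_dom.
Qed.

Lemma glob_rel_trans a b c : glob_rel A a b -> glob_rel A b c -> glob_rel A a c.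
Proof.
case: a b c => [g x] [h y] [k z]; rewrite /glob_rel /= => -[dom_x <-] [dom_y <-].
have [dom_x' pact_x] := pact_comp dom_x dom_y.
have -> : k^-1 * g = (k^-1 * h) * (h^-1 * g) by rewrite mulgA mulgK.
by rewrite pact_x.
Qed.

Lemma glob_proj_eqP a b : glob_proj A a = glob_proj A b <-> glob_rel A a b.
Proof.
split=> [/(congr1 sval) /= rel_ab | ab].
  by rewrite rel_ab; exact: glob_rel_refl.
apply: eq_sig_hprop => [P p1 p2 | /=]; first exact: proof_irrelevance.
apply: functional_extensionality => c; apply: propositional_extensionality.
by split; [exact: glob_rel_trans (glob_rel_sym ab) | exact: glob_rel_trans ab].
Qed.

Lemma glob_proj_surj y : exists a, glob_proj A a = y.
Proof.
case: y => P [a def_P]; exists a; subst P.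
by apply: eq_sig_hprop => [P p1 p2|]; first exact: proof_irrelevance.
Qed.

Lemma glob_rel_coeq_mapsP a b :
  glob_rel A a b <-> exists q, @coeq_map2 G X A q = a /\ coeq_map1 q = b.
Proof.
split=> [|[[h [[k x] dom_x]] [<- <-]]].
  case: a b => [g x] [h y] [dom_x act_x].
  exists (h, exist _ (h^-1 * g, x) dom_x).
  by rewrite /coeq_map1 /coeq_map2 /alpha_GbX /iota_GbX /= act_x mulVKg.
by rewrite /glob_rel /coeq_map1 /coeq_map2 /alpha_GbX /iota_GbX /= mulKg.
Qed.

End Globalization.

Theorem proposition3p4 (G : groupType) (X : Type) (A : partial_action G X) :
  is_coequalizer (@coeq_map1 G X A) (@coeq_map2 G X A) (@glob_proj G X A).
Proof.
apply: surjective_coequalizer; first exact: glob_proj_surj.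
  move=> q; apply/glob_proj_eqP/glob_rel_sym/glob_rel_coeq_mapsP.
  by exists q.
move=> b b' /glob_proj_eqP /glob_rel_sym /glob_rel_coeq_mapsP [q [? ?]].
by exists q.
Qed.
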